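(* Let $d\in\mathbb{N}$, $\mathbf{s}=(s_1,\dots,s_d)\in\mathbb{N}^d$, and let each $l_j(n)$ ($1\le j\le d$) be one of $2n$, $2n+1$, $2n-1$. Then \[ \sum_{n_0>n_1\succ n_2\succ\cdots\succ n_d\succ0}\frac{a_{n_0}}{(2n_0-1)\,l_1(n_1)^{s_1}\cdots l_d(n_d)^{s_d}}=\sum_{n_1\succ n_2\succ\cdots\succ n_d\succ0}\frac{a_{n_1}}{l_1(n_1)^{s_1}\cdots l_d(n_d)^{s_d}}, \] where each $\succ$ can be either $\ge$ or $>$ (the same choices on both sides), provided the series is defined.
   Context: $a_0=1$ and $a_n=\frac{1}{4^n}\binom{2n}{n}$ for $n\ge1$; summation indices are nonnegative integers. *)

From HB Require Import structures.
From mathcomp Require Import all_boot all_order all_algebra.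
From mathcomp Require Import all_classical all_reals.
From mathcomp Require Import ereal numfun esum.
Set Implicit Arguments. Unset Strict Implicit. Unset Printing Implicit Defensive.
Import Order.TTheory GRing.Theory Num.Theory.
Local Open Scope ring_scope.
Local Open Scope classical_set_scope.

Definition acoef (R : realType) (n : nat) : R :=
  if n == 0%N then 1 else ('C(n.*2, n))%:R / 4%:R ^+ n.

Inductive lform := L2n | L2np1 | L2nm1.

Definition leval (R : realType) (l : lform) (n : nat) : R :=
  match l with
  | L2n => (n.*2)%:R
  | L2np1 => (n.*2)%:R + 1
  | L2nm1 => (n.*2)%:R - 1
  end.

Definition succr (b : bool) (m n : nat) : bool :=
  if b then (n < m)%N else (n <= m)%N.

(* For ns = [:: n_1; ...; n_d], the j-th index n_j (1 <= j <= d) is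
   idx ns j; idx ns (d+1) = 0 plays the role of the final "0". *)
Definition idx (ns : seq nat) (j : nat) : nat := nth 0%N ns j.-1.

Definition chain_set (d : nat) (r : nat -> bool) : set (seq nat) :=
  [set ns | size ns = d /\
            forall j, (1 <= j <= d)%N -> succr (r j) (idx ns j) (idx ns j.+1)].

Definition denom (R : realType) (d : nat) (l : nat -> lform) (s : nat -> nat)
  (ns : seq nat) : R :=
  \prod_(1 <= j < d.+1) leval R (l j) (idx ns j) ^+ s j.

Definition chain_set0 (d : nat) (r : nat -> bool) : set (seq nat) :=
  [set m | exists n0 ns, m = n0 :: ns /\ (idx ns 1 < n0)%N /\ chain_set d r ns].

Definition termR (R : realType) d l s (ns : seq nat) : \bar R :=
  (acoef R (idx ns 1) / denom R d l s ns)%:E.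

Definition termL (R : realType) d l s (m : seq nat) : \bar R :=
  (acoef R (head 0%N m) /
     ((((head 0%N m).*2)%:R - 1) * denom R d l s (behead m)))%:E.

Definition ssum (T : choiceType) (R : realType) (D : set T) (f : T -> \bar R)
  : \bar R := (\esum_(x in D) f^\+ x - \esum_(x in D) f^\- x)%E.

From HB Require Import structures.
From mathcomp Require Import all_boot all_order all_algebra.
From mathcomp Require Import all_classical all_reals.
From mathcomp Require Import ereal numfun esum.
From mathcomp Require Import topology normedtype sequences realfun.
From mathcomp Require Import lra zify ring.
Import Order.TTheory GRing.Theory Num.Theory.
Import numFieldNormedType.Exports.
Local Open Scope ring_scope.
Local Open Scope classical_set_scope.

(* For n >= 1 the recursion of the central binomial coefficients gives
   a_n / (2n - 1) = a_(n-1) - a_n, and a_n -> 0 because a_n^2 (2n + 1) <= 1;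
   hence the sum over n_0 > n_1 telescopes to a_(n_1). Summing first over n_0
   and then over the chain (n_1, ..., n_d) is Tonelli's theorem for nonnegative
   families. It applies to the absolute value and to the positive and negative
   parts of the summand, each of which is positively homogeneous, so it can be
   pulled through the nonnegative weight a_(n_0) / (2 n_0 - 1). *)

Lemma mul_bin_centerS n :
  (n.+1 * 'C(n.+1.*2, n.+1) = 2 * n.*2.+1 * 'C(n.*2, n))%N.
Proof.
have diag := mul_bin_diag n.*2.+2 n.
have down := mul_bin_down n.*2.+1 n.
rewrite /= (_ : n.*2.+1 - n = n.+1)%N in down; last by rewrite -addnn; lia.
apply/eqP; rewrite -(eqn_pmul2l (ltn0Sn n)); apply/eqP.
by rewrite doubleS -diag mulnCA -down -addnn; lia.
Qed.

Section CentralBinomial.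
Variable R : realType.

Lemma acoefE n : acoef R n = 'C(n.*2, n)%:R / 4%:R ^+ n.
Proof. by case: n => [|n] //; rewrite /acoef /= bin0 expr0 divr1. Qed.

Lemma acoef_ge0 n : 0 <= acoef R n.
Proof. by rewrite acoefE divr_ge0 // exprn_ge0. Qed.

Lemma acoefS n : acoef R n.+1 = acoef R n * (n.*2.+1)%:R / (n.*2.+2)%:R.
Proof.
have binS : 'C(n.+1.*2, n.+1)%:R = (2 * n.*2.+1 * 'C(n.*2, n))%:R / n.+1%:R :> R.
  by rewrite -mul_bin_centerS natrM mulrAC mulfV ?mul1r // pnatr_eq0.
have -> : n.*2.+2%:R = 2 * n.+1%:R :> R.
  by rewrite -natrM; congr _%:R; rewrite -mul2n; lia.
rewrite !acoefE binS !natrM exprS.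
have pow4_neq0 : 4%:R ^+ n != 0 :> R by rewrite expf_neq0 // pnatr_eq0.
by field; rewrite pow4_neq0 andbT addrC natr1.
Qed.

Definition acoef_odd n : R := acoef R n / ((n.*2)%:R - 1).

Lemma acoef_oddS n : acoef_odd n.+1 = acoef R n - acoef R n.+1.
Proof.
rewrite /acoef_odd acoefS.
have -> : n.+1.*2%:R - 1 = n.*2.+1%:R :> R.
  by rewrite doubleS -addn1 natrD addrK.
have -> : n.*2.+2%:R = n.*2.+1%:R + 1 :> R by rewrite -addn1 natrD.
have n2_ge0 := ler0n R n.*2.
by field; apply/andP; split; apply/eqP; lra.
Qed.

Lemma acoef_odd_ge0 n : (0 < n)%N -> 0 <= acoef_odd n.
Proof.
case: n => // n _; rewrite acoef_oddS subr_ge0 acoefS.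
by rewrite ler_pdivrMr ?ltr0n // ler_wpM2l ?acoef_ge0 // ler_nat.
Qed.

Lemma sum_acoef_odd m n : (m <= n)%N ->
  \sum_(m.+1 <= k < n.+1) acoef_odd k = acoef R m - acoef R n.
Proof.
move=> le_mn; rewrite (telescope_sumr_eq (fun k => - acoef R k.-1)) //=.
  by rewrite opprK addrC.
by case=> // k _; rewrite acoef_oddS /= opprK addrC.
Qed.

Lemma acoef_sqr_le n : acoef R n ^+ 2 * (n.*2.+1)%:R <= 1.
Proof.
elim: n => [|n IH]; first by rewrite /acoef /= expr1n mul1r.
apply: le_trans IH; rewrite acoefS.
have -> : n.+1.*2.+1%:R = n.*2.+1%:R + 2 :> R by rewrite doubleS -addn2 natrD.
have -> : n.*2.+2%:R = n.*2.+1%:R + 1 :> R by rewrite -addn1 natrD.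
have := acoef_ge0 n.
move: (acoef R n) (n.*2.+1%:R) (ltr0Sn R n.*2) => a x x_gt0 a_ge0.
rewrite expr_div_n mulrAC ler_pdivrMr ?exprn_gt0 //; last lra.
by rewrite exprMn -!mulrA ler_wpM2l ?exprn_ge0 //; nra.
Qed.

Lemma acoef_cvg0 : acoef R @ \oo --> 0.
Proof.
have sqr_cvg0 : (fun n => acoef R n ^+ 2) @ \oo --> 0.
  apply: (squeeze_cvgr _ (cvg_cst 0) (@cvg_harmonic R)).
  apply: nearW => n; rewrite exprn_ge0 ?acoef_ge0 //=.
  have := acoef_sqr_le n; rewrite -ler_pdivlMr ?ltr0n // mul1r => /le_trans; apply.
  by rewrite lef_pV2 ?posrE ?ltr0n // ler_nat -addnn; lia.
have : (Num.sqrt \o (fun n => acoef R n ^+ 2)) @ \oo --> Num.sqrt 0.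
  exact: continuous_cvg (@sqrt_continuous R 0) sqr_cvg0.
rewrite sqrtr0; apply: cvg_trans; apply: near_eq_cvg; apply: nearW => n /=.
by rewrite sqrtr_sqr ger0_norm ?acoef_ge0.
Qed.

Lemma nneseries_acoef_odd m :
  (\sum_(n <oo | (m < n)%N) (acoef_odd n)%:E = (acoef R m)%:E)%E.
Proof.
have partial_cvg : (fun n => \sum_(m.+1 <= k < n) acoef_odd k) @ \oo --> acoef R m.
  rewrite -(cvg_shiftn m.+1) /=.
  have -> : (fun n => \sum_(m.+1 <= k < n + m.+1) acoef_odd k) =
            (fun n => acoef R m - acoef R (n + m)).
    by apply/funext => n; rewrite addnS sum_acoef_odd // leq_addl.
  suff : (fun n => acoef R m - acoef R (n + m)) @ \oo --> acoef R m - 0.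
    by rewrite subr0.
  by apply: cvgB; [exact: cvg_cst | rewrite cvg_shiftn; exact: acoef_cvg0].
rewrite -(eseries_cond _ xpredT) /=.
under eq_fun do rewrite sumEFin.
by rewrite EFin_lim ?(cvg_lim _ partial_cvg) //; apply/cvg_ex; exists (acoef R m).
Qed.

End CentralBinomial.

Section ChainSums.
Variables (R : realType) (d : nat) (r : nat -> bool).

Lemma chain_set0E : chain_set0 d r = (fun p : seq nat * nat => p.2 :: p.1) @`
  (chain_set d r `*`` (fun ns => [set n0 | (idx ns 1 < n0)%N])).
Proof.
apply/seteqP; split => m /=.
  by move=> [n0 [ns [-> [lt_n0 chain_ns]]]]; exists (ns, n0).
by move=> [[ns n0] [/= chain_ns lt_n0] <-]; exists n0, ns.
Qed.

Lemma chain_set0_head_gt0 m : chain_set0 d r m -> (0 < head 0%N m)%N.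
Proof. by move=> [n0 [ns [-> [lt_n0 _]]]]; exact: leq_ltn_trans lt_n0. Qed.

Lemma esum_chain_set0 (c : nat -> R) (h : seq nat -> R) :
  (forall n, (0 < n)%N -> 0 <= c n) -> (forall ns, 0 <= h ns) ->
  \esum_(m in chain_set0 d r) (c (head 0%N m) * h (behead m))%:E =
  \esum_(ns in chain_set d r)
     ((\sum_(n <oo | (idx ns 1 < n)%N) (c n)%:E) * (h ns)%:E)%E.
Proof.
move=> c_ge0 h_ge0.
have ch_ge0 ns n : (idx ns 1 < n)%N -> (0 <= (c n * h ns)%:E)%E.
  by move=> lt_n; rewrite lee_fin mulr_ge0 ?c_ge0 // (leq_ltn_trans _ lt_n).
rewrite chain_set0E esum_image; last by move=> [? ?] [? ?] _ _ [-> ->].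
rewrite -(esum_esum (a := fun ns n => (c n * h ns)%:E)) /=; last first.
  by move=> ns n _; exact: ch_ge0.
apply: eq_esum => ns _; rewrite -nneseries_esum; last exact: ch_ge0.
under eq_fun do under eq_bigr do rewrite mulrC EFinM.
rewrite nneseriesZl 1?muleC // => n lt_n.
by rewrite lee_fin c_ge0 // (leq_ltn_trans _ lt_n).
Qed.

Lemma esum_chain_set0_homogeneous (F : R -> R) (g : seq nat -> R) :
  (forall x, 0 <= F x) -> (forall c x, 0 <= c -> F (c * x) = c * F x) ->
  \esum_(m in chain_set0 d r) (F (acoef_odd R (head 0%N m) * g (behead m)))%:E =
  \esum_(ns in chain_set d r) (F (acoef R (idx ns 1) * g ns))%:E.
Proof.
move=> F_ge0 F_homo.
transitivity
  (\esum_(m in chain_set0 d r) (acoef_odd R (head 0%N m) * F (g (behead m)))%:E).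
  apply: eq_esum => m /chain_set0_head_gt0 m_gt0.
  by rewrite F_homo // acoef_odd_ge0.
rewrite (esum_chain_set0 (acoef_odd R) (fun ns => F (g ns))) //.
  by apply: eq_esum => ns _; rewrite nneseries_acoef_odd -EFinM F_homo // acoef_ge0.
exact: acoef_odd_ge0.
Qed.

Variables (l : nat -> lform) (s : nat -> nat).

Lemma esum_termL_homogeneous (F : R -> R) (G : \bar R -> \bar R) :
  (forall x, 0 <= F x) -> (forall c x, 0 <= c -> F (c * x) = c * F x) ->
  (forall x, G x%:E = (F x)%:E) ->
  \esum_(m in chain_set0 d r) G (termL R d l s m) =
  \esum_(ns in chain_set d r) G (termR R d l s ns).
Proof.
move=> F_ge0 F_homo GE; pose g ns := (denom R d l s ns)^-1.
transitivity
  (\esum_(m in chain_set0 d r) (F (acoef_odd R (head 0%N m) * g (behead m)))%:E).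
  by apply: eq_esum => m _; rewrite /termL GE /acoef_odd invfM mulrA.
by rewrite esum_chain_set0_homogeneous //; apply: eq_esum => ns _; rewrite GE.
Qed.

Lemma esum_termL_abs :
  \esum_(m in chain_set0 d r) `|termL R d l s m|%E =
  \esum_(ns in chain_set d r) `|termR R d l s ns|%E.
Proof.
apply: (esum_termL_homogeneous Num.norm abse) => [x|c x c_ge0|x].
- exact: normr_ge0.
- by rewrite normrM ger0_norm.
- exact: abse_EFin.
Qed.

Lemma esum_termL_pos :
  (\esum_(m in chain_set0 d r) (termL R d l s)^\+ m =
   \esum_(ns in chain_set d r) (termR R d l s)^\+ ns)%E.
Proof.
under eq_esum do rewrite funeposE.
under [RHS]eq_esum do rewrite funeposE.
apply: (esum_termL_homogeneous (fun x => Num.max x 0) (fun x => maxe x 0))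
  => [x|c x c_ge0|x].
- by rewrite le_max lexx orbT.
- by rewrite maxr_pMr // mulr0.
- by rewrite EFin_max.
Qed.

Lemma esum_termL_neg :
  (\esum_(m in chain_set0 d r) (termL R d l s)^\- m =
   \esum_(ns in chain_set d r) (termR R d l s)^\- ns)%E.
Proof.
under eq_esum do rewrite funenegE.
under [RHS]eq_esum do rewrite funenegE.
apply: (esum_termL_homogeneous (fun x => Num.max (- x) 0)
                               (fun x => maxe (- x)%E 0)) => [x|c x c_ge0|x].
- by rewrite le_max lexx orbT.
- by rewrite -mulrN maxr_pMr // mulr0.
- by rewrite EFin_max EFinN.
Qed.

End ChainSums.

Theorem theorem5p2 (R : realType) (d : nat) (s : nat -> nat)
  (l : nat -> lform) (r : nat -> bool) :
  (0 < d)%N ->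
  (forall ns, chain_set d r ns -> denom R d l s ns != 0) ->
  summable (chain_set d r) (termR R d l s) ->
  summable (chain_set0 d r) (termL R d l s) /\
  ssum (chain_set0 d r) (termL R d l s) = ssum (chain_set d r) (termR R d l s).
Proof.
move=> _ _ summableR; split; first by rewrite /summable esum_termL_abs.
by rewrite /ssum esum_termL_pos esum_termL_neg.
Qed.
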